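(* Let $(A,\ast,\alpha)$ be a nearly Hom-associative algebra over a field $\mathbb{K}$ of characteristic $0$. Then $(A,[\cdot,\cdot],\alpha)$ is a Hom-Lie algebra, where $[x,y]=x\ast y-y\ast x$ for all $x,y\in A$.
   Context: A nearly Hom-associative algebra is a triple $(A,\ast,\alpha)$ with $A$ a linear space, $\ast:A\times A\to A$ bilinear and $\alpha:A\to A$ linear, such that $\alpha(x)\ast(y\ast z)=(z\ast x)\ast\alpha(y)$ for all $x,y,z\in A$. A Hom-Lie algebra is a triple $(A,[\cdot,\cdot],\alpha)$ with $[\cdot,\cdot]$ bilinear and $\alpha$ linear such that $[x,y]=-[y,x]$ and $[\alpha(x),[y,z]]+[\alpha(y),[z,x]]+[\alpha(z),[x,y]]=0$ for all $x,y,z$. *)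

From mathcomp Require Import all_boot all_algebra.
Set Implicit Arguments. Unset Strict Implicit. Unset Printing Implicit Defensive.
Import GRing.Theory.
Local Open Scope ring_scope.

Definition bilinear_op (K : fieldType) (A : lmodType K) (m : A -> A -> A) : Prop :=
  (forall (a : K) (x y z : A), m (a *: x + y) z = a *: m x z + m y z) /\
  (forall (a : K) (x y z : A), m x (a *: y + z) = a *: m x y + m x z).

Definition linear_map (K : fieldType) (A : lmodType K) (f : A -> A) : Prop :=
  forall (a : K) (x y : A), f (a *: x + y) = a *: f x + f y.

Definition nearly_hom_assoc (K : fieldType) (A : lmodType K)
  (ast : A -> A -> A) (alpha : A -> A) : Prop :=
  [/\ bilinear_op ast, linear_map alpha &
      forall x y z : A, ast (alpha x) (ast y z) = ast (ast z x) (alpha y)].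

Definition hom_lie (K : fieldType) (A : lmodType K)
  (br : A -> A -> A) (alpha : A -> A) : Prop :=
  [/\ bilinear_op br, linear_map alpha,
      (forall x y : A, br x y = - br y x) &
      (forall x y z : A, br (alpha x) (br y z) + br (alpha y) (br z x)
                         + br (alpha z) (br x y) = 0)].

Definition commutator_op (A : zmodType) (ast : A -> A -> A) : A -> A -> A :=
  fun x y => ast x y - ast y x.

From mathcomp Require Import all_boot all_algebra.
Set Implicit Arguments. Unset Strict Implicit. Unset Printing Implicit Defensive.
Local Open Scope ring_scope.
Import GRing.Theory.

(* Writing P(u; v, w) = (u v) alpha(w) + (u w) alpha(v), which is symmetric in
   v and w, the nearly Hom-associative law alpha(x)(y z) = (z x) alpha(y) turns
   the Hom-Jacobi term [alpha(x), [y, z]] into P(z; x, y) - P(y; x, z).  Each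
   P(u; ...) depends only on which of x, y, z comes first, so the cyclic sum
   telescopes to 0. *)

Section Bilinear.

Variables (K : fieldType) (A : lmodType K) (m : A -> A -> A).
Hypothesis m_bilin : bilinear_op m.

Lemma bilinear_opBl (x y z : A) : m (x - y) z = m x z - m y z.
Proof. by rewrite addrC -scaleN1r m_bilin.1 scaleN1r addrC. Qed.

Lemma bilinear_opBr (x y z : A) : m x (y - z) = m x y - m x z.
Proof. by rewrite addrC -scaleN1r m_bilin.2 scaleN1r addrC. Qed.

Lemma bilinear_commutator : bilinear_op (commutator_op m).
Proof.
rewrite /commutator_op; split=> a x y z;
  by rewrite m_bilin.1 m_bilin.2 scalerBr opprD addrACA.
Qed.

End Bilinear.

Lemma commutator_opN (V : zmodType) (m : V -> V -> V) (x y : V) :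
  commutator_op m x y = - commutator_op m y x.
Proof. by rewrite /commutator_op opprB. Qed.

Lemma subr_cyclic_sum (V : zmodType) (a b c : V) : (a - b) + (c - a) + (b - c) = 0.
Proof. by rewrite (addrC (a - b)) (addrA (c - a)) subrK addrA subrK subrr. Qed.

Definition sym_hom_word (V : zmodType) (m : V -> V -> V) (alpha : V -> V)
  (u v w : V) : V :=
  m (m u v) (alpha w) + m (m u w) (alpha v).

Lemma sym_hom_wordC (V : zmodType) (m : V -> V -> V) (alpha : V -> V) (u v w : V) :
  sym_hom_word m alpha u v w = sym_hom_word m alpha u w v.
Proof. exact: addrC. Qed.

Section NearlyHomAssociative.

Variables (K : fieldType) (A : lmodType K) (m : A -> A -> A) (alpha : A -> A).
Hypothesis m_bilin : bilinear_op m.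
Hypothesis m_nearly_assoc :
  forall x y z : A, m (alpha x) (m y z) = m (m z x) (alpha y).

Local Notation br := (commutator_op m).
Local Notation P := (sym_hom_word m alpha).

Lemma commutator_hom_term (x y z : A) :
  br (alpha x) (br y z) = P z x y - P y x z.
Proof.
rewrite /commutator_op !(bilinear_opBl m_bilin, bilinear_opBr m_bilin).
by rewrite !m_nearly_assoc /sym_hom_word opprB addrACA -opprD.
Qed.

Lemma commutator_hom_jacobi (x y z : A) :
  br (alpha x) (br y z) + br (alpha y) (br z x) + br (alpha z) (br x y) = 0.
Proof.
rewrite !commutator_hom_term.
rewrite [P z y x]sym_hom_wordC [P y z x]sym_hom_wordC [P x z y]sym_hom_wordC.
exact: subr_cyclic_sum.
Qed.

End NearlyHomAssociative.

Theorem mainTheorem10 (K : fieldType) (A : lmodType K)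
  (ast : A -> A -> A) (alpha : A -> A) :
  [pchar K] =i pred0 ->
  nearly_hom_assoc ast alpha ->
  hom_lie (commutator_op ast) alpha.
Proof.
move=> _ [ast_bilin alpha_lin ast_nearly_assoc]; split.
- exact: bilinear_commutator.
- exact: alpha_lin.
- exact: commutator_opN.
- exact: commutator_hom_jacobi.
Qed.
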